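(* Let $\nu$ be a positive Borel measure on $]0,\infty[$ satisfying $$\int_{]0,\infty[} \frac{\nu(\mathrm{d} r)}{1+r} < \infty .$$ For $\omega > 0$ define $$\mathcal{A}_1(\omega) := \omega^2 \int_{]0,\infty[} \frac{\nu(\mathrm{d} r)}{\omega^2 + r^2}, \qquad \mathcal{D}_1(\omega) := \omega \int_{]0,\infty[} \frac{r\,\nu(\mathrm{d} r)}{\omega^2 + r^2}.$$ Then, as $\omega \to \infty$: (1) $\mathcal{A}_1(\omega)/\omega \to 0$ and $\mathcal{D}_1(\omega)/\omega \to 0$; (2) if moreover $M := \int_{]0,\infty[} \nu(\mathrm{d} r) < \infty$, then $\mathcal{A}_1(\omega) \to M$.
   Context: The functions $\mathcal{A}_1(\omega) = \mathrm{Re}\, b(-\mathrm{i}\omega)$ and $\mathcal{D}_1(\omega) = -\mathrm{Im}\, b(-\mathrm{i}\omega)$ are the attenuation and dispersion functions associated with an admissible dispersion-attenuation function $b(p) = p\int_{]0,\infty[} \frac{\nu(\mathrm{d} r)}{p+r}$, where $\nu$ (the dispersion-attenuation spectral measure) is a positive measure satisfying the integrability condition above. *)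

From HB Require Import structures.
From mathcomp Require Import all_boot all_order all_algebra.
From mathcomp Require Import all_classical all_reals all_analysis.
Set Implicit Arguments. Unset Strict Implicit. Unset Printing Implicit Defensive.
Import Order.TTheory GRing.Theory Num.Theory.
Import numFieldNormedType.Exports.
Local Open Scope classical_set_scope.
Local Open Scope ring_scope.

Definition A1 (R : realType) (nu : {measure set R -> \bar R}) (w : R) : R :=
  w ^+ 2 * Rintegral nu `]0%R, +oo[ (fun r => (w ^+ 2 + r ^+ 2)^-1).

Definition D1 (R : realType) (nu : {measure set R -> \bar R}) (w : R) : R :=
  w * Rintegral nu `]0%R, +oo[ (fun r => r / (w ^+ 2 + r ^+ 2)).

From HB Require Import structures.
From mathcomp Require Import all_boot all_order all_algebra.
From mathcomp Require Import all_classical all_reals all_analysis.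
From mathcomp Require Import measurable_realfun.
From mathcomp Require Import ring lra.
Import Order.TTheory GRing.Theory Num.Theory.
Import numFieldNormedType.Exports.
Local Open Scope classical_set_scope.
Local Open Scope ring_scope.

(* A_1(w)/w, D_1(w)/w and A_1(w) are the nu-integrals of the kernels
   w/(w^2+r^2), r/(w^2+r^2) and w^2/(w^2+r^2).  For w >= 1 the first two are
   bounded by 2/(1+r), which is nu-integrable by hypothesis, and the third by 1,
   which is nu-integrable when nu has finite mass.  Pointwise in r > 0 the
   kernels tend to 0, 0 and 1 as w -> +oo, so dominated convergence gives the
   three limits. *)

Section dominated_convergence_pinfty.
Context {d : measure_display} {T : measurableType d} {R : realType}.
Context (mu : {measure set T -> \bar R}) {D : set T} (mD : measurable D).
Context {k : R -> T -> R} {l g : T -> R} {w0 : R}.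
Hypothesis mk : forall w, w0 <= w -> measurable_fun D (k w).
Hypothesis ig : mu.-integrable D (EFin \o g).
Hypothesis kg : forall w x, w0 <= w -> D x -> `|k w x| <= g x.
Hypothesis kl : forall x, D x -> k w x @[w --> +oo] --> l x.

Lemma cvg_Rintegral_dominated :
  \int[mu]_(x in D) k w x @[w --> +oo] --> \int[mu]_(x in D) l x.
Proof.
(* Lebesgue's theorem is about sequences: test the limit along u_n --> +oo,
   clamped so as to stay above w0. *)
apply/cvg_pinftyP => u u_oo.
pose v n := Num.max w0 (u n).
have v_ge n : w0 <= v n by rewrite le_max lexx.
have v_oo : v n @[n --> \oo] --> +oo.
  apply/cvgryPge => A; move/cvgryPge: u_oo => /(_ A); apply: filterS => n.
  by move/le_trans; apply; rewrite le_max lexx orbT.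
pose f_ n := EFin \o k (v n).
have mf_ n : measurable_fun D (f_ n) by exact/measurable_EFinP/mk.
have f_l x : D x -> f_ ^~ x @ \oo --> (EFin \o l) x.
  move=> Dx; apply: cvg_EFin; first exact: nearW.
  exact: cvg_comp v_oo (kl x Dx).
have f_g n x : D x -> (`|f_ n x| <= (EFin \o g) x)%E.
  by move=> Dx; rewrite /= lee_fin kg.
have il : mu.-integrable D (EFin \o l).
  exact: lebesgue_integral_dominated_convergence.dominated_integrable
    mD f_ _ _ mf_ f_l ig f_g.
have := @dominated_cvg _ _ _ mu _ mD f_ _ (EFin \o g)
  mf_ f_l (fun _ _ => isT) ig f_g.
rewrite -(fineK (integrable_fin_num mD il)) => /fine_cvg.
apply: cvg_trans; apply: near_eq_cvg.
have [n0 _ u_ge] := proj1 (cvgryPge u) u_oo w0.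
exists n0 => // n /u_ge u_n /=.
by rewrite /f_ /v (max_idPr u_n).
Qed.

End dominated_convergence_pinfty.

Lemma ler_pdiv_cross (R : numFieldType) (a b c e : R) :
  0 < b -> 0 < c -> a * c <= e * b -> a / b <= e / c.
Proof. by move=> b0 c0; rewrite ler_pdivrMr // mulrAC ler_pdivlMr. Qed.

Lemma cvgr_dist_le_div (R : realType) (f : R -> R) (l c : R) :
  (forall w, 1 <= w -> `|l - f w| <= c / w) -> f w @[w --> +oo] --> l.
Proof.
move=> fl; apply/cvgrPdist_le => e e0; near=> w.
have w1 : 1 <= w by near: w; exact/nbhs_pinfty_ge/num_real.
have ce : c / e <= w by near: w; exact/nbhs_pinfty_ge/num_real.
apply: le_trans (fl w w1) _.
by rewrite ler_pdivrMr ?(lt_le_trans ltr01) // mulrC -ler_pdivrMr.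
Unshelve. all: by end_near.
Qed.

Section sqrD_kernels.
Context {R : realType}.
Implicit Types w r : R.

Lemma sqrD_gt0 w r : 1 <= w -> 0 < w ^+ 2 + r ^+ 2.
Proof. by move=> w1; rewrite ltr_pwDl ?sqr_ge0 // exprn_gt0 // (lt_le_trans ltr01). Qed.

Lemma sqrD_ge w r : 1 <= w -> w <= w ^+ 2 + r ^+ 2.
Proof. by move=> w1; have := sqr_ge0 r; rewrite !expr2; nra. Qed.

Lemma norm_divw_sqrD_le w r : 1 <= w -> 0 < r ->
  `|w / (w ^+ 2 + r ^+ 2)| <= 2 / (1 + r).
Proof.
move=> w1 r0; have d0 := sqrD_gt0 w r w1.
rewrite ger0_norm; last by rewrite divr_ge0 ?ltW //; lra.
apply: ler_pdiv_cross => //; first lra.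
nra.
Qed.

Lemma norm_divr_sqrD_le w r : 1 <= w -> 0 < r ->
  `|r / (w ^+ 2 + r ^+ 2)| <= 2 / (1 + r).
Proof.
move=> w1 r0; have d0 := sqrD_gt0 w r w1.
rewrite ger0_norm; last by rewrite divr_ge0 ?ltW.
have w2 : 1 <= w ^+ 2 by rewrite expr2; nra.
have := sqr_ge0 (r - 1); rewrite expr2 => r1.
apply: ler_pdiv_cross => //; first lra.
nra.
Qed.

Lemma norm_sqr_div_sqrD_le1 w r : 1 <= w -> `|w ^+ 2 / (w ^+ 2 + r ^+ 2)| <= 1.
Proof.
move=> w1; have d0 := sqrD_gt0 w r w1.
rewrite ger0_norm; last by rewrite divr_ge0 ?sqr_ge0 ?ltW.
by rewrite ler_pdivrMr // mul1r lerDl sqr_ge0.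
Qed.

Lemma divw_sqrD_cvg0 r : w / (w ^+ 2 + r ^+ 2) @[w --> +oo] --> 0.
Proof.
apply: (@cvgr_dist_le_div _ _ _ 1) => w w1; have d0 := sqrD_gt0 w r w1.
rewrite sub0r normrN ger0_norm; last by rewrite divr_ge0 ?ltW //; lra.
apply: ler_pdiv_cross => //; first lra.
by have := sqrD_ge w r w1; nra.
Qed.

Lemma divr_sqrD_cvg0 r : 0 <= r -> r / (w ^+ 2 + r ^+ 2) @[w --> +oo] --> 0.
Proof.
move=> r0; apply: (@cvgr_dist_le_div _ _ _ r) => w w1; have d0 := sqrD_gt0 w r w1.
rewrite sub0r normrN ger0_norm; last by rewrite divr_ge0 // ltW.
apply: ler_pdiv_cross => //; first lra.
by have := sqrD_ge w r w1; nra.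
Qed.

Lemma sqr_div_sqrD_cvg1 r : w ^+ 2 / (w ^+ 2 + r ^+ 2) @[w --> +oo] --> (1 : R).
Proof.
apply: (@cvgr_dist_le_div _ _ _ (r ^+ 2)) => w w1; have d0 := sqrD_gt0 w r w1.
have -> : 1 - w ^+ 2 / (w ^+ 2 + r ^+ 2) = r ^+ 2 / (w ^+ 2 + r ^+ 2).
  by field; rewrite gt_eqF.
rewrite ger0_norm; last by rewrite divr_ge0 ?sqr_ge0 ?ltW.
apply: ler_pdiv_cross => //; first lra.
by have := sqrD_ge w r w1; have := sqr_ge0 r; nra.
Qed.

Lemma measurable_fun_div_sqrD {D : set R} {c : R -> R} w :
  measurable D -> 1 <= w -> continuous c ->
  measurable_fun D (fun r => c r / (w ^+ 2 + r ^+ 2)).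
Proof.
move=> mD w1 cc; apply: measurable_funTS; apply: continuous_measurable_fun => r.
apply: cvgM; first exact: cc.
apply: cvgV; first by rewrite gt_eqF ?sqrD_gt0.
by apply: cvgD; [exact: cvg_cst | rewrite expr2; apply: cvgM; exact: cvg_id].
Qed.

End sqrD_kernels.

Section attenuation_dispersion_asymptotics.
Variables (R : realType) (nu : {measure set R -> \bar R}).
Local Notation I := (`]0%R, +oo[%classic : set R).
Hypothesis nu_int : (\int[nu]_(r in I) ((1 + r)^-1)%:E < +oo)%E.

Let mI : measurable I. Proof. exact: measurable_itv. Qed.

Let I_gt0 {r} : I r -> 0 < r.
Proof. by rewrite /= in_itv /= andbT. Qed.

Lemma integrable_2_div1D : nu.-integrable I (EFin \o fun r => 2 / (1 + r)).
Proof.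
have m1D : measurable_fun I (fun r : R => (1 + r)^-1).
  apply: open_continuous_measurable_fun; first exact: rray_open.
  move=> r; rewrite inE => /I_gt0 r0; apply: cvgV; first by rewrite gt_eqF //; lra.
  by apply: cvgD; [exact: cvg_cst | exact: cvg_id].
have i1D : nu.-integrable I (EFin \o fun r => (1 + r)^-1).
  apply/integrableP; split; first exact/measurable_EFinP.
  rewrite (eq_integral (fun r : R => ((1 + r)^-1)%:E)) // => r /[!inE] /I_gt0 r0.
  by rewrite /= ger0_norm // invr_ge0; lra.
by apply: (eq_integrable mI _ _ _ (integrableZl mI 2 i1D)) => r _; rewrite /= EFinM.
Qed.

Lemma integrable_inv_sqrD w : 1 <= w ->
  nu.-integrable I (EFin \o fun r => (w ^+ 2 + r ^+ 2)^-1).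
Proof.
move=> w1; apply: le_integrable integrable_2_div1D => //.
  apply/measurable_EFinP.
  apply: eq_measurable_fun (measurable_fun_div_sqrD w mI w1 (@cst_continuous R R 1)).
  by move=> r _; exact: mul1r.
move=> r /I_gt0 r0; have d0 := sqrD_gt0 w r w1.
have i0 : 0 <= (w ^+ 2 + r ^+ 2)^-1 by rewrite invr_ge0 ltW.
have q0 : 0 <= 2 / (1 + r) by rewrite divr_ge0 //; lra.
have := norm_divw_sqrD_le w r w1 r0.
rewrite ger0_norm; last by rewrite divr_ge0 // ltW // (lt_le_trans ltr01).
move=> h; rewrite /= lee_fin !ger0_norm //; apply: le_trans h.
exact: ler_peMl.
Qed.

Let eventually_ge1 : \forall w \near +oo, (1 : R) <= w.
Proof. exact/nbhs_pinfty_ge/num_real. Qed.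

Lemma A1_div_cvg0 : A1 nu w / w @[w --> +oo] --> 0.
Proof.
have := cvg_Rintegral_dominated nu mI (l := fun _ => 0) (w0 := 1)
  (fun w w1 => measurable_fun_div_sqrD w mI w1 (@cst_continuous R R w))
  integrable_2_div1D (fun w r w1 r0 => norm_divw_sqrD_le w r w1 (I_gt0 r0))
  (fun r _ => divw_sqrD_cvg0 r).
rewrite Rintegral_cst // mul0r => lim0; apply: cvg_trans lim0; apply: near_eq_cvg.
apply: filterS eventually_ge1 => w w1 /=.
have w0 : w != 0 by rewrite gt_eqF // (lt_le_trans ltr01).
by rewrite /A1 mulrAC expr2 mulfK // -RintegralZl // integrable_inv_sqrD.
Qed.

Lemma D1_div_cvg0 : D1 nu w / w @[w --> +oo] --> 0.
Proof.
have cid : continuous (@id R) by move=> r; exact: cvg_id.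
have := cvg_Rintegral_dominated nu mI (l := fun _ => 0) (w0 := 1)
  (fun w w1 => measurable_fun_div_sqrD w mI w1 cid)
  integrable_2_div1D (fun w r w1 r0 => norm_divr_sqrD_le w r w1 (I_gt0 r0))
  (fun r r0 => divr_sqrD_cvg0 r (ltW (I_gt0 r0))).
rewrite Rintegral_cst // mul0r => lim0; apply: cvg_trans lim0; apply: near_eq_cvg.
apply: filterS eventually_ge1 => w w1 /=.
have w0 : w != 0 by rewrite gt_eqF // (lt_le_trans ltr01).
by rewrite /D1 [w * _]mulrC mulfK.
Qed.

Lemma A1_cvg_mass : (nu I < +oo)%E -> A1 nu w @[w --> +oo] --> fine (nu I).
Proof.
move=> nuI; have i1 : nu.-integrable I (EFin \o fun _ => 1).
  apply/integrableP; split; first exact/measurable_EFinP/measurable_cst.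
  under eq_integral do rewrite /= normr1.
  by rewrite integral_cst // mul1e.
have := cvg_Rintegral_dominated nu mI (l := fun _ => 1) (w0 := 1)
  (fun w w1 => measurable_fun_div_sqrD w mI w1 (@cst_continuous R R (w ^+ 2)))
  i1 (fun w r w1 _ => norm_sqr_div_sqrD_le1 w r w1)
  (fun r _ => sqr_div_sqrD_cvg1 r).
rewrite Rintegral_cst // mul1r => lim1; apply: cvg_trans lim1; apply: near_eq_cvg.
apply: filterS eventually_ge1 => w w1 /=.
by rewrite /A1 -RintegralZl // integrable_inv_sqrD.
Qed.

End attenuation_dispersion_asymptotics.

Theorem theorem2 (R : realType) (nu : {measure set R -> \bar R})
  (hnu : (\int[nu]_(r in `]0%R, +oo[) ((1 + r)^-1)%:E < +oo)%E) :
  ((fun w => A1 nu w / w) x @[x --> +oo] --> (0 : R)) /\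
  ((fun w => D1 nu w / w) x @[x --> +oo] --> (0 : R)) /\
  ((nu `]0%R, +oo[%classic < +oo)%E ->
     (A1 nu x @[x --> +oo] --> fine (nu `]0%R, +oo[%classic))).
Proof.
split; first exact: A1_div_cvg0.
split; first exact: D1_div_cvg0.
exact: A1_cvg_mass.
Qed.
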